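(* Let $(\mathcal P,\cdot,[-,\dots,-])$ be a Poisson $n$-Lie algebra and let $\widetilde{\mathcal P}=\otimes^{n-1}\mathcal P$ be equipped with the componentwise product $(x_1\otimes\cdots\otimes x_{n-1})\cdot(y_1\otimes\cdots\otimes y_{n-1})=x_1y_1\otimes\cdots\otimes x_{n-1}y_{n-1}$ and with the bilinear bracket defined on pure tensors $x=x_1\otimes\cdots\otimes x_{n-1}$, $y=y_1\otimes\cdots\otimes y_{n-1}$ by $$[x,y]_\otimes=\sum_{i=1}^{n-1}y_1\otimes\cdots\otimes[x_1,\dots,x_{n-1},y_i]\otimes\cdots\otimes y_{n-1}.$$ Let $\mathcal J$ be the ideal of $\widetilde{\mathcal P}$ with respect to both operations $\cdot$ and $[-,-]_\otimes$ generated by all elements $[x,y]_\otimes+[y,x]_\otimes$, $x,y\in\otimes^{n-1}\mathcal P$. Then $(\widetilde{\mathcal P}/\mathcal J,\cdot,[-,-]_\otimes)$ with the induced operations is a Poisson algebra.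
   Context: A Poisson $n$-Lie algebra is a commutative associative algebra $(\mathcal P,\cdot)$ with an $n$-linear skew-symmetric bracket satisfying the fundamental identity $[x_1,\dots,x_{n-1},[y_1,\dots,y_n]]=\sum_{i=1}^n[y_1,\dots,[x_1,\dots,x_{n-1},y_i],\dots,y_n]$ and the Leibniz rule $[y\cdot z,x_2,\dots,x_n]=y\cdot[z,x_2,\dots,x_n]+z\cdot[y,x_2,\dots,x_n]$. A Poisson algebra is a commutative associative algebra with a Lie bracket $[-,-]$ satisfying $[x,y\cdot z]=[x,y]\cdot z+y\cdot[x,z]$. *)

From HB Require Import structures.
From mathcomp Require Import all_boot all_order all_algebra all_fingroup.
Set Implicit Arguments. Unset Strict Implicit. Unset Printing Implicit Defensive.
Import GRing.Theory.
Local Open Scope ring_scope.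

Definition upd (I : eqType) (T : Type) (f : I -> T) (i : I) (v : T) : I -> T :=
  fun j => if j == i then v else f j.

(* (x_1,...,x_m, y) as a family indexed by 'I_m.+1, y in the last slot *)
Definition extend (T : Type) (m : nat) (x : 'I_m -> T) (y : T) : 'I_m.+1 -> T :=
  fun i => match unlift ord_max i with Some j => x j | None => y end.

Section Defs.
Variable K : fieldType.

Definition linear_map (U W : lmodType K) (g : U -> W) : Prop :=
  forall (a : K) (u v : U), g (a *: u + v) = a *: g u + g v.

Definition multilinear (P W : lmodType K) (k : nat) (f : ('I_k -> P) -> W) : Prop :=
  forall (y : 'I_k -> P) (i : 'I_k) (a : K) (u v : P),
    f (upd y i (a *: u + v)) = a *: f (upd y i u) + f (upd y i v).

Definition bilinear_op (U : lmodType K) (op : U -> U -> U) : Prop :=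
  (forall b, linear_map (fun a => op a b)) /\ (forall a, linear_map (op a)).

Definition comm_assoc_alg (P : lmodType K) (mul : P -> P -> P) : Prop :=
  bilinear_op mul /\ (forall a b, mul a b = mul b a)
  /\ (forall a b c, mul (mul a b) c = mul a (mul b c)).

(* Poisson n-Lie algebra with n = m.+1, bracket br : P^n -> P *)
Definition poisson_nlie (m : nat) (P : lmodType K) (mul : P -> P -> P)
    (br : ('I_m.+1 -> P) -> P) : Prop :=
  comm_assoc_alg mul
  /\ multilinear br
  /\ (forall (y : 'I_m.+1 -> P) (i j : 'I_m.+1), i != j ->
        br (fun k => y (tperm i j k)) = - br y)
  /\ (forall (x : 'I_m -> P) (y : 'I_m.+1 -> P),
        br (extend x (br y)) =
        \sum_(i < m.+1) br (upd y i (br (extend x (y i)))))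
  /\ (forall (x : 'I_m.+1 -> P) (y z : P),
        br (upd x ord0 (mul y z)) =
        mul y (br (upd x ord0 z)) + mul z (br (upd x ord0 y))).

Definition is_tensor_power (m : nat) (P T : lmodType K)
    (iota : ('I_m -> P) -> T) : Prop :=
  multilinear iota /\
  forall (W : lmodType K) (f : ('I_m -> P) -> W), multilinear f ->
    (exists g : T -> W, linear_map g /\ forall x, g (iota x) = f x) /\
    (forall g1 g2 : T -> W, linear_map g1 -> linear_map g2 ->
       (forall x, g1 (iota x) = f x) -> (forall x, g2 (iota x) = f x) ->
       forall t, g1 t = g2 t).

Definition is_ideal2 (T : lmodType K) (mulT brT : T -> T -> T) (I : T -> Prop) :=
  I 0 /\ (forall (a : K) u v, I u -> I v -> I (a *: u + v))
  /\ (forall t a, I a -> I (mulT t a) /\ I (mulT a t) /\ I (brT t a) /\ I (brT a t)).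

Definition gen_ideal2 (T : lmodType K) (mulT brT : T -> T -> T) (S : T -> Prop)
    : T -> Prop :=
  fun t => forall I, is_ideal2 mulT brT I -> (forall s, S s -> I s) -> I t.

(* The quotient T/J with induced operations is a Poisson algebra:
   J is an ideal for both operations (so the induced operations are
   well-defined and bilinear), and the Poisson algebra axioms hold
   modulo J, i.e. in T/J. *)
Definition poisson_quotient (T : lmodType K) (mulT brT : T -> T -> T)
    (J : T -> Prop) : Prop :=
  bilinear_op mulT /\ bilinear_op brT /\ is_ideal2 mulT brT J
  /\ (forall a b, J (mulT a b - mulT b a))
  /\ (forall a b c, J (mulT (mulT a b) c - mulT a (mulT b c)))
  /\ (forall a b, J (brT a b + brT b a))
  /\ (forall a b c, J (brT a (brT b c) + brT b (brT c a) + brT c (brT a b)))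
  /\ (forall a b c, J (brT a (mulT b c) - (mulT (brT a b) c + mulT b (brT a c)))).

End Defs.

(* For x = x_1 (x) ... (x) x_{n-1}, the map D_x := [x_1, ..., x_{n-1}, -] is a
   derivation of (P, .) (Leibniz rule plus skew-symmetry), and [x, -]_(x) is its
   extension to the tensor power by the Leibniz rule. Such extensions commute like the
   operators they extend, and the fundamental identity says [D_x, D_y] = D_{[x,y]_(x)};
   hence [-,-]_(x) satisfies the left Leibniz identity [a,[b,c]] = [[a,b],c] + [b,[a,c]]
   and is a derivation of the componentwise product. In such a structure the Jacobi
   identity holds modulo the ideal generated by the symmetrised brackets [a,b] + [b,a],
   which makes the quotient Poisson. Identities checked on pure tensors extend to the
   whole tensor power by its universal property. *)

From HB Require Import structures.
From mathcomp Require Import all_boot all_order all_algebra all_fingroup.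
From Stdlib Require Import FunctionalExtensionality.
Set Implicit Arguments. Unset Strict Implicit.
Import GRing.Theory.
Local Open Scope ring_scope.

Section LinearMaps.
Variables (K : fieldType) (U V W : lmodType K).

Lemma lin0 (g : U -> W) : linear_map g -> g 0 = 0.
Proof.
move=> hg; have := hg 1 0 0; rewrite !scale1r addr0 => h.
by apply: (addrI (g 0)); rewrite addr0 -h.
Qed.

Lemma linD (g : U -> W) : linear_map g -> forall u v, g (u + v) = g u + g v.
Proof. by move=> hg u v; have := hg 1 u v; rewrite !scale1r. Qed.

Lemma linN (g : U -> W) : linear_map g -> forall u, g (- u) = - g u.
Proof. by move=> hg u; have := hg (-1) u 0; rewrite addr0 (lin0 hg) addr0 !scaleN1r. Qed.

Lemma linB (g : U -> W) : linear_map g -> forall u v, g (u - v) = g u - g v.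
Proof. by move=> hg u v; rewrite (linD hg) (linN hg). Qed.

Lemma lin_sum (g : U -> W) : linear_map g ->
  forall (I : Type) (r : seq I) (Pr : pred I) (F : I -> U),
  g (\sum_(i <- r | Pr i) F i) = \sum_(i <- r | Pr i) g (F i).
Proof. by move=> hg I r Pr F; apply: (big_morph g (linD hg) (lin0 hg)). Qed.

Lemma lin_comp (g : V -> W) (h : U -> V) :
  linear_map g -> linear_map h -> linear_map (fun u => g (h u)).
Proof. by move=> hg hh a u v; rewrite hh hg. Qed.

Lemma lin_add (g h : U -> W) :
  linear_map g -> linear_map h -> linear_map (fun u => g u + h u).
Proof. by move=> hg hh a u v; rewrite hg hh scalerDr addrACA. Qed.

Lemma lin_sub (g h : U -> W) :
  linear_map g -> linear_map h -> linear_map (fun u => g u - h u).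
Proof. by move=> hg hh a u v; rewrite hg hh scalerBr opprD addrACA. Qed.

End LinearMaps.

Lemma multilinear_slot (K : fieldType) (P W : lmodType K) (k : nat)
    (f : ('I_k -> P) -> W) (y : 'I_k -> P) (i : 'I_k) :
  multilinear f -> linear_map (fun v => f (upd y i v)).
Proof. by move=> hf a u v; apply: hf. Qed.

Section Families.
Variables (T : Type).

Lemma upd_same (I : eqType) (f : I -> T) i v : upd f i v i = v.
Proof. by rewrite /upd eqxx. Qed.

Lemma upd_other (I : eqType) (f : I -> T) i j v : j != i -> upd f i v j = f j.
Proof. by rewrite /upd => /negPf ->. Qed.

Lemma upd_upd (I : eqType) (f : I -> T) i v w : upd (upd f i v) i w = upd f i w.
Proof. by apply: functional_extensionality => j; rewrite /upd; case: (j == i). Qed.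

Lemma upd_comm (I : eqType) (f : I -> T) i j v w : i != j ->
  upd (upd f i v) j w = upd (upd f j w) i v.
Proof.
move=> hij; apply: functional_extensionality => k; rewrite /upd.
by case: (eqVneq k j) => [->|//]; rewrite eq_sym (negPf hij).
Qed.

Lemma upd_zipl (I : eqType) (S R : Type) (f : T -> S -> R) (y : I -> T) z i v :
  (fun k => f (upd y i v k) (z k)) = upd (fun k => f (y k) (z k)) i (f v (z i)).
Proof. by apply: functional_extensionality => k; rewrite /upd; case: eqP => [->|]. Qed.

Lemma upd_zipr (I : eqType) (S R : Type) (f : S -> T -> R) y (z : I -> T) i v :
  (fun k => f (y k) (upd z i v k)) = upd (fun k => f (y k) (z k)) i (f (y i) v).
Proof. by apply: functional_extensionality => k; rewrite /upd; case: eqP => [->|]. Qed.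

Variable m : nat.

Lemma widen_ord_lift (j : 'I_m) : widen_ord (leqnSn m) j = lift ord_max j.
Proof. by apply: val_inj; rewrite /= /bump leqNgt ltn_ord. Qed.

Lemma extend_max (x : 'I_m -> T) y : extend x y ord_max = y.
Proof. by rewrite /extend unlift_none. Qed.

Lemma extend_widen (x : 'I_m -> T) y j : extend x y (widen_ord (leqnSn m) j) = x j.
Proof. by rewrite /extend widen_ord_lift liftK. Qed.

Lemma extend_eq (x : 'I_m -> T) y w (t : 'I_m.+1) :
  t != ord_max -> extend x y t = extend x w t.
Proof. by rewrite /extend; case: unliftP => [j _|->]; rewrite ?eqxx. Qed.

Lemma upd_extend_max (x : 'I_m -> T) y v : upd (extend x y) ord_max v = extend x v.
Proof.
apply: functional_extensionality => k; rewrite /upd /extend.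
by case: unliftP => [j ->|->]; rewrite ?eqxx // eq_sym eq_liftF.
Qed.

Lemma upd_extend_widen (x : 'I_m -> T) y j v :
  upd (extend x y) (widen_ord (leqnSn m) j) v = extend (upd x j v) y.
Proof.
apply: functional_extensionality => k; rewrite /upd /extend widen_ord_lift.
case: unliftP => [j' ->|->]; first by rewrite (inj_eq (@lift_inj _ _)).
by rewrite eq_liftF.
Qed.

End Families.

Definition derivation (P : nmodType) (mul : P -> P -> P) (d : P -> P) : Prop :=
  forall u v, d (mul u v) = mul (d u) v + mul u (d v).

Section PoissonNLie.
Variables (K : fieldType) (m : nat) (P : lmodType K) (mul : P -> P -> P).
Variable br : ('I_m.+1 -> P) -> P.
Hypothesis hP : poisson_nlie mul br.

Lemma fundamental_identity_extend x y w :
  br (extend x (br (extend y w))) - br (extend y (br (extend x w))) =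
  \sum_(j < m) br (extend (upd y j (br (extend x (y j)))) w).
Proof.
have [_ [_ [_ [fundamental _]]]] := hP.
rewrite fundamental big_ord_recr /= upd_extend_max extend_max addrK.
by apply: eq_bigr => j _; rewrite extend_widen upd_extend_widen.
Qed.

(* Skew-symmetry moves the free slot from last to first, where the Leibniz rule applies. *)
Lemma br_extend_derivation (x : 'I_m -> P) :
  (0 < m)%N -> derivation mul (fun v => br (extend x v)).
Proof.
move=> m_gt0 y z.
have [[[_ mul_linr] [mulC _]] [_ [skew [_ leibniz]]]] := hP.
have first_neq_last : (ord0 : 'I_m.+1) != ord_max by rewrite neq_ltn /= m_gt0.
pose swapped v k := extend x v (tperm ord0 ord_max k).
have extend_swapped v : br (extend x v) = - br (swapped v).
  by rewrite /swapped (skew (extend x v) _ _ first_neq_last) opprK.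
have upd_swapped u v : upd (swapped u) ord0 v = swapped v.
  apply: functional_extensionality => k; rewrite /upd /swapped.
  case: (eqVneq k ord0) => [->|k_neq0]; first by rewrite tpermL extend_max.
  apply: extend_eq; case: (eqVneq k ord_max) => [->|k_neq_max]; first by rewrite tpermR.
  by rewrite tpermD // eq_sym.
rewrite !extend_swapped -(upd_swapped 0 (mul y z)) leibniz !upd_swapped.
by rewrite opprD -!(linN (mul_linr _)) addrC [mul z _]mulC.
Qed.

End PoissonNLie.

Section TensorDerivation.
Variables (K : fieldType) (m : nat) (P T : lmodType K) (iota : ('I_m -> P) -> T).
Hypothesis iota_multilinear : multilinear iota.

(* [tensor_der d z] is [D (iota z)], where [D] extends [d] to the tensor power
   by the Leibniz rule. *)
Definition tensor_der (d : P -> P) (z : 'I_m -> P) : T :=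
  \sum_(j < m) iota (upd z j (d (z j))).

Let iota_slot z j := multilinear_slot z j iota_multilinear.

Lemma tensor_der_sum (I : Type) (r : seq I) (f : I -> P -> P) z :
  tensor_der (fun v => \sum_(i <- r) f i v) z = \sum_(i <- r) tensor_der (f i) z.
Proof.
by rewrite /tensor_der exchange_big; apply: eq_bigr => j _; rewrite (lin_sum (iota_slot z j)).
Qed.

Lemma tensor_der_upd d z j v :
  tensor_der d (upd z j v) =
  iota (upd z j (d v)) + \sum_(i < m | i != j) iota (upd (upd z j v) i (d (z i))).
Proof.
rewrite /tensor_der (bigD1 j) //= upd_upd !upd_same; congr (_ + _).
by apply: eq_bigr => i i_neq_j; rewrite upd_other.
Qed.

Lemma tensor_der_cross d e z :
  \sum_(j < m) \sum_(i < m | i != j) iota (upd (upd z j (e (z j))) i (d (z i))) =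
  \sum_(j < m) \sum_(i < m | i != j) iota (upd (upd z j (d (z j))) i (e (z i))).
Proof.
rewrite (exchange_big_dep xpredT) //=; apply: eq_bigr => j _.
apply: eq_big => [i|i i_neq_j]; first by rewrite eq_sym.
by rewrite upd_comm // eq_sym.
Qed.

Lemma tensor_der_comp (A B : T -> T) (d e : P -> P) z :
  linear_map A ->
  (forall z, A (iota z) = tensor_der d z) -> (forall z, B (iota z) = tensor_der e z) ->
  A (B (iota z)) = \sum_(j < m) iota (upd z j (d (e (z j))))
    + \sum_(j < m) \sum_(i < m | i != j) iota (upd (upd z j (e (z j))) i (d (z i))).
Proof.
move=> A_lin A_iota B_iota; rewrite B_iota (lin_sum A_lin) -big_split.
by apply: eq_bigr => j _; rewrite A_iota tensor_der_upd.
Qed.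

(* The mixed terms, where d and e act on different factors, cancel. *)
Lemma tensor_der_commutator (A B : T -> T) (d e : P -> P) :
  linear_map A -> linear_map B ->
  (forall z, A (iota z) = tensor_der d z) -> (forall z, B (iota z) = tensor_der e z) ->
  forall z, A (B (iota z)) - B (A (iota z)) = tensor_der (fun v => d (e v) - e (d v)) z.
Proof.
move=> A_lin B_lin A_iota B_iota z.
rewrite (tensor_der_comp z A_lin A_iota B_iota) (tensor_der_comp z B_lin B_iota A_iota).
rewrite tensor_der_cross opprD addrACA subrr addr0 -sumrB.
by apply: eq_bigr => j _; rewrite (linB (iota_slot z j)).
Qed.

Variables (mul : P -> P -> P) (mulT : T -> T -> T).
Hypothesis mulT_bilinear : bilinear_op mulT.
Hypothesis mulT_iota : forall x y, mulT (iota x) (iota y) = iota (fun i => mul (x i) (y i)).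

Lemma tensor_der_mul d : derivation mul d -> forall y z,
  tensor_der d (fun i => mul (y i) (z i)) =
  mulT (tensor_der d y) (iota z) + mulT (iota y) (tensor_der d z).
Proof.
move=> d_der y z; have [mulT_linl mulT_linr] := mulT_bilinear.
rewrite (lin_sum (mulT_linl _)) (lin_sum (mulT_linr _)) -big_split.
apply: eq_bigr => i _; rewrite !mulT_iota upd_zipl upd_zipr d_der.
by rewrite (linD (iota_slot _ _)).
Qed.

End TensorDerivation.

Section TensorPowerMaps.
Variables (K : fieldType) (m : nat) (P T : lmodType K) (iota : ('I_m -> P) -> T).
Hypothesis tensor : is_tensor_power iota.
Variable W : lmodType K.

Lemma tensor_lin_eq0 (g : T -> W) :
  linear_map g -> (forall x, g (iota x) = 0) -> forall t, g t = 0.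
Proof.
move=> g_lin g_iota; have [_ universal] := tensor.
have zero_ml : multilinear (fun _ : 'I_m -> P => 0 : W) by move=> *; rewrite scaler0 addr0.
have [_ unique] := universal W _ zero_ml.
by apply: unique => // a u v; rewrite scaler0 addr0.
Qed.

Lemma tensor_bilin_eq0 (D : T -> T -> W) :
  (forall b, linear_map (D ^~ b)) -> (forall a, linear_map (D a)) ->
  (forall x y, D (iota x) (iota y) = 0) -> forall a b, D a b = 0.
Proof.
move=> D_linl D_linr D_iota a b.
apply: (tensor_lin_eq0 (D_linl b)) => x.
exact: (tensor_lin_eq0 (D_linr _)).
Qed.

Lemma tensor_trilin_eq0 (D : T -> T -> T -> W) :
  (forall b c, linear_map (fun a => D a b c)) ->
  (forall a c, linear_map (fun b => D a b c)) ->
  (forall a b, linear_map (D a b)) ->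
  (forall x y z, D (iota x) (iota y) (iota z) = 0) -> forall a b c, D a b c = 0.
Proof.
move=> D_lin1 D_lin2 D_lin3 D_iota a b c.
apply: (tensor_lin_eq0 (D_lin1 b c)) => x.
exact: (tensor_bilin_eq0 (D_lin2 _) (D_lin3 _)).
Qed.

End TensorPowerMaps.

Section Ideals.
Variables (K : fieldType) (T : lmodType K) (mulT brT : T -> T -> T).

Lemma ideal2D (I : T -> Prop) u v :
  is_ideal2 mulT brT I -> I u -> I v -> I (u + v).
Proof. by move=> [_ [I_lin _]] Iu Iv; have := I_lin 1 u v Iu Iv; rewrite scale1r. Qed.

Lemma ideal2_brTr (I : T -> Prop) :
  is_ideal2 mulT brT I -> forall t a, I a -> I (brT t a).
Proof. by move=> [_ [_ I_stable]] t a Ia; have [_ [_ []]] := I_stable t a Ia. Qed.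

Lemma gen_ideal2_ideal (S : T -> Prop) : is_ideal2 mulT brT (gen_ideal2 mulT brT S).
Proof.
split; first by move=> I [].
split=> [k u v Ju Jv I I_ideal S_I | t a Ja].
  by have [_ [I_lin _]] := I_ideal; apply: I_lin; [apply: Ju | apply: Jv].
by split; [|split; [|split]] => I I_ideal S_I;
  have [_ [_ I_stable]] := I_ideal; have := I_stable t a (Ja I I_ideal S_I); tauto.
Qed.

Lemma gen_ideal2_gen (S : T -> Prop) s : S s -> gen_ideal2 mulT brT S s.
Proof. by move=> Ss I _ S_I; apply: S_I. Qed.

End Ideals.

Section LeibnizQuotient.
Variables (K : fieldType) (T : lmodType K) (mulT brT : T -> T -> T).
Hypotheses (mulT_bilinear : bilinear_op mulT) (brT_bilinear : bilinear_op brT).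
Hypothesis mulTC : forall a b, mulT a b = mulT b a.
Hypothesis mulTA : forall a b c, mulT (mulT a b) c = mulT a (mulT b c).
Hypothesis brT_leibniz : forall a b c, brT a (brT b c) = brT (brT a b) c + brT b (brT a c).
Hypothesis brT_mulTr : forall a b c, brT a (mulT b c) = mulT (brT a b) c + mulT b (brT a c).

Let J := gen_ideal2 mulT brT (fun s => exists a b, s = brT a b + brT b a).

Let J_ideal : is_ideal2 mulT brT J := gen_ideal2_ideal mulT brT _.

Lemma J_sym a b : J (brT a b + brT b a).
Proof. by apply: gen_ideal2_gen; exists a, b. Qed.

(* By the Leibniz identity the Jacobiator is ([[a,b],c] + [c,[a,b]]) + [b, [a,c] + [c,a]]. *)
Lemma J_jacobi a b c : J (brT a (brT b c) + brT b (brT c a) + brT c (brT a b)).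
Proof.
rewrite brT_leibniz -(addrA (brT (brT a b) c)) addrAC.
rewrite -(linD (proj2 brT_bilinear b)).
by apply: ideal2D J_ideal _ _; [apply: J_sym | apply: (ideal2_brTr J_ideal); apply: J_sym].
Qed.

Lemma leibniz_quotient_poisson : poisson_quotient mulT brT J.
Proof.
have J0 : J 0 by have [] := J_ideal.
split=> //; split=> //; split=> //.
split; first by move=> a b; rewrite mulTC subrr.
split; first by move=> a b c; rewrite mulTA subrr.
split; first exact: J_sym.
split; first exact: J_jacobi.
by move=> a b c; rewrite brT_mulTr subrr.
Qed.

End LeibnizQuotient.

Section TensorPoisson.
Variables (K : fieldType) (m : nat) (P : lmodType K) (mul : P -> P -> P).
Variable br : ('I_m.+1 -> P) -> P.
Hypotheses (m_gt0 : (0 < m)%N) (hP : poisson_nlie mul br).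
Variables (T : lmodType K) (iota : ('I_m -> P) -> T).
Hypothesis tensor : is_tensor_power iota.
Variables mulT brT : T -> T -> T.
Hypotheses (mulT_bilinear : bilinear_op mulT) (brT_bilinear : bilinear_op brT).
Hypothesis mulT_iota : forall x y, mulT (iota x) (iota y) = iota (fun i => mul (x i) (y i)).
Hypothesis brT_iota : forall x y,
  brT (iota x) (iota y) = tensor_der iota (fun v => br (extend x v)) y.

Let iota_multilinear : multilinear iota := proj1 tensor.
Let mulT_linl := proj1 mulT_bilinear.
Let mulT_linr := proj2 mulT_bilinear.
Let brT_linl := proj1 brT_bilinear.
Let brT_linr := proj2 brT_bilinear.

Lemma brT_iota_leibniz x y z :
  brT (iota x) (brT (iota y) (iota z)) =
  brT (brT (iota x) (iota y)) (iota z) + brT (iota y) (brT (iota x) (iota z)).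
Proof.
apply/eqP; rewrite -subr_eq; apply/eqP.
rewrite (tensor_der_commutator iota_multilinear (brT_linr _) (brT_linr _) (brT_iota x) (brT_iota y)).
rewrite brT_iota (lin_sum (brT_linl _)); under eq_bigr do rewrite brT_iota.
rewrite -(tensor_der_sum iota_multilinear); congr tensor_der; apply: functional_extensionality => v.
exact: (fundamental_identity_extend hP).
Qed.

Lemma brT_iota_mulTr x y z :
  brT (iota x) (mulT (iota y) (iota z)) =
  mulT (brT (iota x) (iota y)) (iota z) + mulT (iota y) (brT (iota x) (iota z)).
Proof.
rewrite mulT_iota !brT_iota; apply: tensor_der_mul => //.
exact: br_extend_derivation.
Qed.

Lemma tensor_mulC a b : mulT a b = mulT b a.
Proof.
apply: subr0_eq; move: a b.
apply: (tensor_bilin_eq0 tensor) => [b|a|x y].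
- exact: lin_sub (mulT_linl b) (mulT_linr b).
- exact: lin_sub (mulT_linr a) (mulT_linl a).
have [_ [mulC _]] := proj1 hP.
by rewrite !mulT_iota (functional_extensionality _ _ (fun i => mulC (x i) (y i))) subrr.
Qed.

Lemma tensor_mulA a b c : mulT (mulT a b) c = mulT a (mulT b c).
Proof.
apply: subr0_eq; move: a b c.
apply: (tensor_trilin_eq0 tensor) => [b c|a c|a b|x y z].
- exact: lin_sub (lin_comp (mulT_linl c) (mulT_linl b)) (mulT_linl _).
- exact: lin_sub (lin_comp (mulT_linl c) (mulT_linr a)) (lin_comp (mulT_linr a) (mulT_linl c)).
- exact: lin_sub (mulT_linr _) (lin_comp (mulT_linr a) (mulT_linr b)).
have [_ [_ mulA]] := proj1 hP.
by rewrite !mulT_iota (functional_extensionality _ _ (fun i => mulA (x i) (y i) (z i))) subrr.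
Qed.

Lemma tensor_brT_leibniz a b c : brT a (brT b c) = brT (brT a b) c + brT b (brT a c).
Proof.
apply: subr0_eq; move: a b c.
apply: (tensor_trilin_eq0 tensor) => [b c|a c|a b|x y z].
- exact: lin_sub (brT_linl _)
    (lin_add (lin_comp (brT_linl c) (brT_linl b)) (lin_comp (brT_linr b) (brT_linl c))).
- exact: lin_sub (lin_comp (brT_linr a) (brT_linl c))
    (lin_add (lin_comp (brT_linl c) (brT_linr a)) (brT_linl _)).
- exact: lin_sub (lin_comp (brT_linr a) (brT_linr b))
    (lin_add (brT_linr _) (lin_comp (brT_linr b) (brT_linr a))).
by rewrite brT_iota_leibniz subrr.
Qed.

Lemma tensor_brT_mulTr a b c : brT a (mulT b c) = mulT (brT a b) c + mulT b (brT a c).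
Proof.
apply: subr0_eq; move: a b c.
apply: (tensor_trilin_eq0 tensor) => [b c|a c|a b|x y z].
- exact: lin_sub (brT_linl _)
    (lin_add (lin_comp (mulT_linl c) (brT_linl b)) (lin_comp (mulT_linr b) (brT_linl c))).
- exact: lin_sub (lin_comp (brT_linr a) (mulT_linl c))
    (lin_add (lin_comp (mulT_linl c) (brT_linr a)) (mulT_linl _)).
- exact: lin_sub (lin_comp (brT_linr a) (mulT_linr b))
    (lin_add (mulT_linr _) (lin_comp (mulT_linr b) (brT_linr a))).
by rewrite brT_iota_mulTr subrr.
Qed.

End TensorPoisson.

Unset Implicit Arguments.

Theorem proposition4p5 (K : fieldType) (m : nat) (hm : (0 < m)%N)
  (P : lmodType K) (mul : P -> P -> P) (br : ('I_m.+1 -> P) -> P)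
  (hP : poisson_nlie mul br)
  (T : lmodType K) (iota : ('I_m -> P) -> T) (hT : is_tensor_power iota)
  (mulT brT : T -> T -> T)
  (hmulT : bilinear_op mulT) (hbrT : bilinear_op brT)
  (hmul_iota : forall x y : 'I_m -> P,
      mulT (iota x) (iota y) = iota (fun i => mul (x i) (y i)))
  (hbr_iota : forall x y : 'I_m -> P,
      brT (iota x) (iota y) =
      \sum_(i < m) iota (upd y i (br (extend x (y i))))) :
  poisson_quotient mulT brT
    (gen_ideal2 mulT brT (fun s => exists a b, s = brT a b + brT b a)).
Proof.
apply: (leibniz_quotient_poisson hmulT hbrT).
- exact: (tensor_mulC hP hT hmulT hmul_iota).
- exact: (tensor_mulA hP hT hmulT hmul_iota).
- exact: (tensor_brT_leibniz hP hT hbrT hbr_iota).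
- exact: (tensor_brT_mulTr hm hP hT hmulT hbrT hmul_iota hbr_iota).
Qed.
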